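(* Let $D\in QH^*(G,\mathbb Z)$ and write $D=a+ib$ as a function on $\mathrm{Spec}\,R$ with real-valued functions $a,b$. Then there is a real-valued function $r$ on $\mathrm{Spec}\,R$ with $r(p)>0$ for all $p$ such that $\overline D=r\,(a-ib)$ as functions on $\mathrm{Spec}\,R$; moreover $D*\overline D$ is a real-valued function on $\mathrm{Spec}\,R$.
   Context: Let $0<k<n$ be integers, $l=n-k$, and $G=G(k,n)$ the Grassmannian of $k$-planes in $\mathbb C^n$. Schubert classes $S_\lambda$ of $G$ are indexed by Young diagrams $\lambda=(\lambda_1\ge\dots\ge\lambda_l\ge0)$ with $\lambda_1\le k$. $QH^*(G,\mathbb Z)$ denotes the small quantum cohomology ring of $G$ with the quantum parameter $q$ set equal to $1$, a free $\mathbb Z$-module with basis the Schubert classes, product denoted $*$. The operator $X\mapsto\overline X$ is defined on Schubert classes and extended $\mathbb Z$-linearly: for $\lambda$ let $d_\lambda$ be the largest $i$ with $\lambda_i\ge i$ ($0$ if none); then $\overline{S_\lambda}=S_\mu$ with $\mu_i=d_\lambda+k-\lambda_{d_\lambda-i+1}$ for $i\le d_\lambda$ and $\mu_i=d_\lambda-\lambda_{l-i+d_\lambda+1}$ for $i>d_\lambda$. Let $R=QH^*(G,\mathbb C)=QH^*(G,\mathbb Z)\otimes\mathbb C$. It is known that $R$ is a semisimple commutative $\mathbb C$-algebra, so $\mathrm{Spec}\,R$ is a finite set of reduced points and $R$ is identified with the algebra of $\mathbb C$-valued functions on $\mathrm{Spec}\,R$; each class $X$ thus gives a function $p\mapsto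 X(p)\in\mathbb C$, with $(X*Y)(p)=X(p)Y(p)$. *)

(* Combinatorial model of QH^*(G(k,n)) at q = 1 via the
   Bertram / Siebert--Tian presentation. *)
From mathcomp Require Import all_boot all_order all_algebra all_field.
Set Implicit Arguments. Unset Strict Implicit. Unset Printing Implicit Defensive.
Import Order.TTheory GRing.Theory Num.Theory.
Local Open Scope ring_scope.

(* Young diagrams lambda = (lambda_1 >= ... >= lambda_l >= 0), lambda_1 <= k,
   l = n - k; stored 0-based as an l-tuple of entries in {0..k}. *)
Definition part (k n : nat) :=
  {t : (n - k).-tuple 'I_k.+1 | sorted (fun a b : nat => (b <= a)%N) (map val t)}.

Definition lam_at k n (lam : part k n) (i : nat) : nat := nth 0%N (map val (val lam)) i.

(* d_lambda = largest (1-based) i with lambda_i >= i, 0 if none *)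
Definition durfee k n (lam : part k n) : nat :=
  \max_(i < n - k | (i.+1 <= lam_at lam i)%N) i.+1.

(* the diagram mu of the bar operator, 0-based: for 1-based i' = i+1,
   mu_{i'} = d + k - lambda_{d-i'+1}      if i' <= d,
   mu_{i'} = d - lambda_{l-i'+d+1}        if i' > d. *)
Definition bar_seq k n (lam : part k n) : seq nat :=
  let d := durfee lam in let l := (n - k)%N in
  mkseq (fun i => if (i < d)%N then (d + k - lam_at lam (d - 1 - i))%N
                  else (d - lam_at lam (l - 1 - i + d))%N) l.

(* the bar operator on Schubert indices (mu is always a valid diagram;
   the insubd/inord defaults are never used) *)
Definition bar_part k n (lam : part k n) : part k n :=
  insubd lam [tuple (inord (nth 0%N (bar_seq lam) i) : 'I_k.+1) | i < n - k].

(* QH^*(G,Z) as a free Z-module on the Schubert classes *)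
Definition QH (k n : nat) := {ffun part k n -> int}.

Definition schubert k n (lam : part k n) : QH k n := [ffun mu => (mu == lam)%:Z].

(* Z-linear extension of S_lam |-> S_{bar lam} *)
Definition qh_bar k n (D : QH k n) : QH k n :=
  [ffun mu => \sum_(lam | bar_part lam == mu) D lam].

(* Spec R: ring homomorphisms Z[sigma_1..sigma_k] -> C killing the ideal
   (Y_{l+1}, ..., Y_{n-1}, Y_n + (-1)^k q) at q = 1; a point is the tuple of
   values of the special Schubert classes sigma_1..sigma_k. *)
Definition sigma k (v : {ffun 'I_k -> algC}) (m : int) : algC :=
  match m with
  | Posz 0 => 1
  | Posz m'.+1 => oapp v 0 (insub m' : option 'I_k)
  | Negz _ => 0
  end.

Definition Ydet k (v : {ffun 'I_k -> algC}) (m : nat) : algC :=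
  \det (\matrix_(i < m, j < m) sigma v (1 + j%:Z - i%:Z)).

Definition is_qpoint k n (v : {ffun 'I_k -> algC}) : bool :=
  [forall m : 'I_n, (n - k < m)%N ==> (Ydet v m == 0)]
  && (Ydet v n + (-1) ^+ k == 0).

Definition qpoint (k n : nat) := {v : {ffun 'I_k -> algC} | is_qpoint n v}.

(* value of the Schubert class S_lam at a point (Giambelli determinant) *)
Definition schub_eval k n (lam : part k n) (p : qpoint k n) : algC :=
  \det (\matrix_(i < n - k, j < n - k)
          sigma (val p) ((lam_at lam i)%:Z + j%:Z - i%:Z)).

Definition ev k n (X : QH k n) (p : qpoint k n) : algC :=
  \sum_lam (X lam)%:~R * schub_eval lam p.

(* At a point of Spec R, write E(x) = sum_i sigma_i x^i and A(x) = sum_m (-1)^m Y_m x^m.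
   The quantum relations say exactly that E * A = 1 - eps x^n with eps = (-1)^(l+1), so A has
   l distinct roots whose inverses zeta_j satisfy zeta_j^n = eps; in particular |zeta_j| = 1,
   i.e. conj zeta_j = zeta_j^-1.  Giambelli's determinant then evaluates to the bialternant
   det (zeta_j^(lam_i + l-1-i)) / det (zeta_j^(l-1-i)).  Inverting the zeta_j and multiplying
   by the factors zeta_j^n = eps permutes the rows of the alternant of lam into those of the
   alternant of bar lam, up to a scalar that cancels against the same computation for
   lam = 0.
   Hence bar is complex conjugation on Spec R, and r = 1 works. *)

From mathcomp Require Import all_boot all_order all_algebra all_field.
From mathcomp Require Import perm zify.
Set Implicit Arguments. Unset Strict Implicit. Unset Printing Implicit Defensive.
Import Order.TTheory GRing.Theory Num.Theory.

Definition bar_fun k l (lamf : nat -> nat) d i : nat :=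
  if i < d then d + k - lamf (d - 1 - i) else d - lamf (l - 1 - i + d).

Section Partition.
Variables (k n : nat) (lam : part k n).
Local Notation l := (n - k).
Local Notation d := (durfee lam).

Lemma size_lam : size (map val (val lam)) = l.
Proof. by rewrite size_map size_tuple. Qed.

Lemma lam_at_le_k i : lam_at lam i <= k.
Proof.
rewrite /lam_at; have [hi|hi] := ltnP i (size (map val (val lam))).
  by rewrite (nth_map ord0) -1?ltnS ?ltn_ord // -(size_map val).
by rewrite nth_default.
Qed.

Lemma lam_at_nonincr i j : i <= j -> j < l -> lam_at lam j <= lam_at lam i.
Proof.
move=> hij hj; have geq_trans : transitive (fun a b : nat => b <= a).
  by move=> a b c h1 h2; apply: leq_trans h2 h1.
apply: (sorted_leq_nth geq_trans (fun a => leqnn a) 0 (valP lam));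
  by rewrite ?inE ?size_lam //; lia.
Qed.

Lemma durfee_le_l : d <= l.
Proof. by apply/bigmax_leqP => i _; exact: ltn_ord. Qed.

Lemma durfee_max i : i < l -> i < lam_at lam i -> i < d.
Proof.
move=> hi; exact: (@leq_bigmax_cond _ (fun i : 'I_l => i < lam_at lam i)
  (fun i : 'I_l => i.+1) (Ordinal hi)).
Qed.

Lemma durfee_le_lam_at i : i < d -> d <= lam_at lam i.
Proof.
rewrite /durfee; have [i0 Pi0|no_i0] := pickP (fun i : 'I_l => i < lam_at lam i); last first.
  by rewrite big_pred0.
have [j Pj maxj] := @arg_maxnP _ i0 (fun i : 'I_l => i < lam_at lam i) (fun i => i.+1) Pi0.
have -> : \max_(i < l | i < lam_at lam i) i.+1 = j.+1.
  apply/eqP; rewrite eqn_leq; apply/andP; split; first by apply/bigmax_leqP => i' /maxj.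
  exact: (@leq_bigmax_cond _ (fun i : 'I_l => i < lam_at lam i) (fun i => i.+1) j Pj).
move=> hij; apply: leq_trans Pj (lam_at_nonincr _ (ltn_ord j)); lia.
Qed.

Lemma lam_at_le_durfee i : d <= i -> i < l -> lam_at lam i <= d.
Proof.
move=> hdi hi; rewrite leqNgt; apply/negP => hd.
have /durfee_max : d < l by lia.
by have := lam_at_nonincr hdi hi; lia.
Qed.

Lemma durfee_le_k : d <= k.
Proof.
have [->//|hd] := posnP d.
exact: leq_trans (durfee_le_lam_at hd) (lam_at_le_k 0).
Qed.

Lemma nth_bar_seq i : i < l -> nth 0 (bar_seq lam) i = bar_fun k l (lam_at lam) d i.
Proof. by move=> hi; rewrite /bar_seq nth_mkseq. Qed.

Lemma bar_seq_le_k i : nth 0 (bar_seq lam) i <= k.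
Proof.
have [hi|hi] := ltnP i l; last by rewrite nth_default // size_mkseq.
rewrite nth_bar_seq // /bar_fun; case: ifP => hid; last by have := durfee_le_k; lia.
by have := @durfee_le_lam_at (d - 1 - i); lia.
Qed.

Lemma sorted_bar_seq : sorted (fun a b : nat => b <= a) (bar_seq lam).
Proof.
apply/(sortedP 0) => i; rewrite size_mkseq => hi.
rewrite !nth_bar_seq /bar_fun //; last by lia.
have := durfee_le_l; have := durfee_le_k.
have [h1|h1] := ltnP i.+1 d.
  rewrite ifT; last by lia.
  by have := @lam_at_nonincr (d - 1 - i.+1) (d - 1 - i); lia.
have [h2|h2] := ltnP i d.
  by have := lam_at_le_k (d - 1 - i); have := @durfee_le_lam_at (d - 1 - i); lia.
by have := @lam_at_nonincr (l - 1 - i.+1 + d) (l - 1 - i + d); lia.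
Qed.

Lemma lam_at_bar i : lam_at (bar_part lam) i = nth 0 (bar_seq lam) i.
Proof.
have bar_val : map val (val [tuple (inord (nth 0 (bar_seq lam) i) : 'I_k.+1) | i < l])
               = bar_seq lam.
  apply: (@eq_from_nth _ 0); first by rewrite size_map size_tuple size_mkseq.
  move=> j; rewrite size_map size_tuple => hj.
  rewrite (nth_map ord0) ?size_tuple // -[j]/(nat_of_ord (Ordinal hj)).
  by rewrite -tnth_nth tnth_mktuple /= inordK // ltnS bar_seq_le_k.
by rewrite /lam_at /bar_part insubdK ?bar_val // unfold_in /= bar_val sorted_bar_seq.
Qed.

End Partition.

Definition rot_ord l (s : nat) (i : 'I_l) : 'I_l :=
  Ordinal (ltn_pmod (i + s) (leq_ltn_trans (leq0n i) (ltn_ord i))).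

Lemma rot_ord_inj l s : injective (@rot_ord l s).
Proof.
move=> i j /(congr1 val) /= /eqP; rewrite eqn_modDr !modn_small // => /eqP.
exact: val_inj.
Qed.

Definition rot_perm l s : {perm 'I_l} := perm (@rot_ord_inj l s).

Lemma rot_permE l s (i : 'I_l) : val (rot_perm l s i) = (i + s) %% l.
Proof. by rewrite permE. Qed.

Lemma odd_rot_perm l s : odd_perm (rot_perm l s) = odd (s * l.-1).
Proof.
case: l => [|m].
  by rewrite (_ : rot_perm 0 s = 1%g) ?odd_perm1 ?muln0 //; apply/permP => -[].
have rot1 : rot_perm m.+1 1 = lift_perm ord_max ord0 1%g.
  apply/permP => x; apply/val_inj; rewrite rot_permE addn1.
  have [y ->|->] := unliftP ord_max x; last by rewrite lift_perm_id /= modnn.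
  rewrite lift_perm_lift perm1 /= /bump /= leqNgt ltn_ord add0n.
  by rewrite modn_small // ltnS ltn_ord.
elim: s => [|s IHs].
  rewrite (_ : rot_perm _ 0 = 1%g) ?odd_perm1 //.
  by apply/permP => x; apply/val_inj; rewrite rot_permE addn0 modn_small ?perm1.
have -> : rot_perm m.+1 s.+1 = (rot_perm m.+1 s * rot_perm m.+1 1)%g.
  by apply/permP => x; apply/val_inj; rewrite permM !rot_permE modnDml addn1 addnS.
by rewrite odd_permM IHs rot1 odd_lift_perm odd_perm1 /= !addbF mulSn oddD addbC.
Qed.

Definition bar_perm l d : {perm 'I_l} := (rot_perm l (l - d) * perm (@rev_ord_inj l))%g.

Lemma bar_permE l d (i : 'I_l) : d <= l ->
  nat_of_ord (bar_perm l d i) = if i < d then d - 1 - i else l - 1 - i + d.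
Proof.
move=> dl; rewrite permM permE /= rot_permE; have hi := ltn_ord i.
case: ltnP => hid; first by rewrite modn_small; lia.
by rewrite (_ : i + (l - d) = i - d + l) ?modnDr ?modn_small; lia.
Qed.

Lemma odd_bar_perm l d :
  odd_perm (bar_perm l d) = odd ((l - d) * l.-1) (+) odd_perm (bar_perm l 0).
Proof.
rewrite !odd_permM !odd_rot_perm subn0; congr (_ (+) _).
by case: l => //= m; rewrite oddM /= andNb addFb.
Qed.

Lemma odd_rot_sign l d : d <= l -> odd ((l - d) * l.-1) (+) odd (l.+1 * d) = false.
Proof.
case: l => [|m] dl; first by move: dl; rewrite leqn0 => /eqP ->.
by rewrite /= !oddM oddB //=; case: (odd m); case: (odd d).
Qed.

Local Open Scope ring_scope.

Lemma det_scale_perm (R : comRingType) m (A B : 'M[R]_m) (a b : 'I_m -> R)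
    (s : {perm 'I_m}) :
  (forall i j, A i j = a i * B (s i) j * b j) ->
  \det A = (-1) ^+ s * (\prod_i a i) * (\prod_j b j) * \det B.
Proof.
move=> AE; have -> : A = diag_mx (\row_i a i) *m (perm_mx s *m B) *m diag_mx (\row_j b j).
  by apply/matrixP => i j; rewrite mul_mx_diag mul_diag_mx -row_permE !mxE AE.
rewrite !det_mulmx !det_diag det_perm.
rewrite (eq_bigr a) => [|i _]; last by rewrite mxE.
rewrite [X in _ * X](eq_bigr b) => [|j _]; last by rewrite mxE.
by rewrite -!mulrA mulrCA [\det B * _]mulrC.
Qed.

Lemma sum_nat_widen_zero (V : nmodType) m n (F : nat -> V) : (m <= n)%N ->
  (forall r, (m <= r)%N -> (r < n)%N -> F r = 0) ->
  \sum_(r < m) F r = \sum_(r < n) F r.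
Proof.
move=> mn F0; rewrite (big_ord_widen n F mn) big_mkcond /=.
by apply: eq_bigr => r _; case: ltnP => // /F0 ->.
Qed.

Lemma mulr_signnn (R : pzRingType) i : (-1) ^+ i * (-1) ^+ i = 1 :> R.
Proof. by rewrite -exprD -signr_odd oddD addbb. Qed.

Lemma separable_1_subZXn (F : fieldType) (c : F) m :
  m%:R != 0 :> F -> separable_poly (1 - c *: 'X^m).
Proof.
move=> m_neq0; rewrite unlock; apply/Bezout_coprimepP.
exists (1, - m%:R^-1 *: 'X) => /=.
have m_gt0 : (0 < m)%N by case: m m_neq0; rewrite ?eqxx.
have -> : (1 - c *: 'X^m)^`() = - (c * m%:R) *: 'X^(m.-1).
  by rewrite derivB derivC derivZ derivXn sub0r -scaler_nat scalerA scaleNr.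
rewrite mul1r -scalerAl -scalerAr scalerA -exprS prednK //.
have -> : - m%:R^-1 * - (c * m%:R) = c by rewrite mulrNN mulrC -mulrA mulfV ?mulr1.
by rewrite subrK eqpxx.
Qed.

Arguments sigma : simpl never.

Section YdetRecursion.
Variables (k : nat) (v : {ffun 'I_k -> algC}).

Lemma sigma0 : sigma v 0 = 1.
Proof. by []. Qed.

Lemma sigma_gt (m : nat) : (k < m)%N -> sigma v m%:Z = 0.
Proof. by case: m => // m hm; rewrite /sigma insubF // ltnNge -ltnS hm. Qed.

Lemma sigma_lt0 (x : int) : x < 0 -> sigma v x = 0.
Proof. by case: x. Qed.

Lemma Ydet0 : Ydet v 0 = 1.
Proof. by rewrite /Ydet det_mx00. Qed.

Definition Ydet_row0 (a : nat -> algC) m := \det (\matrix_(i < m, j < m)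
  if i == 0%N :> nat then a j else sigma v (1 + j%:Z - i%:Z)).

Lemma Ydet_row0_rec m a :
  Ydet_row0 a m.+2 = a 0%N * Ydet v m.+1 - Ydet_row0 (fun j => a j.+1) m.+1.
Proof.
rewrite /Ydet_row0 (expand_det_col _ ord0) !big_ord_recl big1 => [|i _]; last first.
  by rewrite !mxE mul0r.
rewrite addr0 !mxE /= /cofactor /= expr0 expr1 !mul1r mulN1r.
congr (_ * _ - _); congr (\det _); apply/matrixP => i j; rewrite !mxE /=.
  by congr (sigma v _); rewrite /bump /=; lia.
by case: i => [[|i]].
Qed.

Lemma Ydet_row0E m a :
  Ydet_row0 a m.+1 = \sum_(j < m.+1) (-1) ^+ j * a j * Ydet v (m - j).
Proof.
elim: m a => [|m IHm] a.
  by rewrite /Ydet_row0 det_mx11 big_ord1 !mxE /= Ydet0 mul1r mulr1.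
rewrite Ydet_row0_rec IHm [RHS]big_ord_recl /= mul1r subn0 -sumrN.
by congr (_ + _); apply: eq_bigr => j _; rewrite exprS !mulN1r !mulNr.
Qed.

Lemma Ydet_rec c : (0 < c)%N ->
  \sum_(i < c.+1) (-1) ^+ i * sigma v i%:Z * Ydet v (c - i) = 0.
Proof.
case: c => // c _; rewrite big_ord_recl /= mul1r subn0.
have -> : Ydet v c.+1 = Ydet_row0 (fun j => sigma v j.+1) c.+1.
  congr (\det _); apply/matrixP => i j; rewrite !mxE /=.
  by case: i => [[|i]] hi //=; congr (sigma v _); lia.
rewrite Ydet_row0E mul1r -big_split big1 // => j _.
by rewrite /bump /= add1n subSS exprS mulN1r !mulNr subrr.
Qed.

End YdetRecursion.

Section QuantumPoint.
Variables (k n : nat) (hk : (0 < k)%N) (hkn : (k < n)%N) (v : {ffun 'I_k -> algC}).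
Hypothesis qv : is_qpoint n v.
Local Notation l := (n - k)%N.

Let n_gt0 : (0 < n)%N := leq_ltn_trans (leq0n k) hkn.

Definition sigma_poly : {poly algC} := \poly_(i < k.+1) sigma v i%:Z.
Definition Ydet_poly : {poly algC} := \poly_(m < l.+1) ((-1) ^+ m * Ydet v m).
Definition eps : algC := (-1) ^+ l.+1.

Lemma coef_sigma_poly i : sigma_poly`_i = sigma v i%:Z.
Proof. by rewrite coef_poly; case: ltnP => // hi; rewrite sigma_gt. Qed.

Lemma coef_Ydet_poly m : Ydet_poly`_m = if (m <= l)%N then (-1) ^+ m * Ydet v m else 0.
Proof. by rewrite coef_poly ltnS. Qed.

Lemma Ydet_mid m : (l < m)%N -> (m < n)%N -> Ydet v m = 0.
Proof.
move=> hlm hmn; case/andP: qv => /forallP /(_ (Ordinal hmn)) /implyP Y0 _.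
exact/eqP/Y0.
Qed.

Lemma Ydet_n : Ydet v n = - (-1) ^+ k.
Proof. by case/andP: qv => _; rewrite addr_eq0 => /eqP. Qed.

Lemma sigma_k_mul_Ydet_l : sigma v k * Ydet v l = 1.
Proof.
have := Ydet_rec v n_gt0.
have hk1 : (k < n.+1)%N by lia.
rewrite (bigD1 ord0) //= (bigD1 (Ordinal hk1)) /=; last by rewrite -val_eqE /=; lia.
rewrite big1 => [|i /andP[]]; last first.
  rewrite -!val_eqE /= => hi0 hik; have [hki|hik'] := ltnP k i.
    by rewrite sigma_gt // mulr0 mul0r.
  by rewrite Ydet_mid ?mulr0 //; lia.
rewrite expr0 sigma0 !mul1r subn0 Ydet_n addr0 addrC => /eqP.
rewrite subr_eq0 => /eqP top.
by rewrite -[LHS]mul1r -(mulr_signnn _ k) -mulrA [X in _ * X]mulrA top mulr_signnn.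
Qed.

Lemma sigma_poly_mul_Ydet_poly : sigma_poly * Ydet_poly = 1 - eps *: 'X^n.
Proof.
apply/polyP => c; rewrite coefM coefB coef1 coefZ coefXn.
have [->|c_gt0] := posnP c.
  rewrite big_ord1 coef_sigma_poly coef_Ydet_poly sigma0 Ydet0 /= !mul1r.
  by rewrite eq_sym eqn0Ngt n_gt0 mulr0 subr0.
rewrite sub0r.
have [c_lt_n|c_gt_n|->] := ltngtP c n.
- rewrite mulr0 oppr0 -[RHS](mulr0 ((-1) ^+ c)) -[0 in RHS](Ydet_rec v c_gt0) mulr_sumr.
  apply: eq_bigr => i _; rewrite coef_sigma_poly coef_Ydet_poly.
  have hic : (i <= c)%N := ltn_ord i.
  case: leqP => hcil; last by rewrite Ydet_mid ?mulr0 //; lia.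
  have -> : (-1) ^+ c = (-1) ^+ (c - i) * (-1) ^+ i :> algC by rewrite -exprD subnK.
  rewrite -[RHS]mulrA [in RHS](mulrA ((-1) ^+ i)) [in RHS](mulrA ((-1) ^+ i)).
  by rewrite mulr_signnn mul1r mulrCA.
- rewrite mulr0 oppr0 big1 // => i _; rewrite coef_sigma_poly coef_Ydet_poly.
  have [hki|hik] := ltnP k i; first by rewrite sigma_gt ?mul0r.
  by rewrite ifF ?mulr0 //; lia.
- have hk1 : (k < n.+1)%N by lia.
  rewrite (bigD1 (Ordinal hk1)) //= big1 ?addr0 => [|i]; last first.
    rewrite -val_eqE /= => hik; rewrite coef_sigma_poly coef_Ydet_poly.
    have [hki|hik'] := ltnP k i; first by rewrite sigma_gt ?mul0r.
    by rewrite ifF ?mulr0 //; lia.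
  rewrite coef_sigma_poly coef_Ydet_poly leqnn mulr1 /eps exprS mulN1r opprK.
  by rewrite mulrCA sigma_k_mul_Ydet_l mulr1.
Qed.

Lemma eps_sq : eps * eps = 1.
Proof. exact: mulr_signnn. Qed.

Lemma eps_neq0 : eps != 0.
Proof. by rewrite signr_eq0. Qed.

Lemma size_Ydet_poly : size Ydet_poly = l.+1.
Proof.
rewrite size_poly_eq // mulf_neq0 ?signr_eq0 //.
apply/eqP => Y0; move: sigma_k_mul_Ydet_l.
by rewrite Y0 mulr0 => /eqP; rewrite eq_sym oner_eq0.
Qed.

Lemma Ydet_poly_neq0 : Ydet_poly != 0.
Proof. by rewrite -size_poly_eq0 size_Ydet_poly. Qed.

Definition Ydet_roots : seq algC := sval (closed_field_poly_normal Ydet_poly).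

Lemma Ydet_polyE :
  Ydet_poly = lead_coef Ydet_poly *: \prod_(x <- Ydet_roots) ('X - x%:P).
Proof. exact: svalP (closed_field_poly_normal Ydet_poly). Qed.

Lemma lead_coef_Ydet_poly_neq0 : lead_coef Ydet_poly != 0.
Proof. by rewrite lead_coef_eq0 Ydet_poly_neq0. Qed.

Lemma size_Ydet_roots : size Ydet_roots = l.
Proof.
have := size_Ydet_poly; rewrite Ydet_polyE size_scale ?lead_coef_Ydet_poly_neq0 //.
by rewrite size_prod_XsubC => -[].
Qed.

Lemma uniq_Ydet_roots : uniq Ydet_roots.
Proof.
rewrite -separable_prod_XsubC -(eqp_separable (eqp_scale _ lead_coef_Ydet_poly_neq0)).
rewrite -Ydet_polyE; apply: dvdp_separable (@separable_1_subZXn _ eps n _).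
  by rewrite -sigma_poly_mul_Ydet_poly dvdp_mull.
by rewrite pnatr_eq0 -lt0n n_gt0.
Qed.

Lemma root_Ydet_roots r : r \in Ydet_roots -> root Ydet_poly r.
Proof. by move=> hr; rewrite Ydet_polyE rootZ ?lead_coef_Ydet_poly_neq0 ?root_prod_XsubC. Qed.

Definition yroot j := nth 0 Ydet_roots j.
Definition zeta j := (yroot j)^-1.

Lemma yroot_exp j : (j < l)%N -> yroot j ^+ n = eps.
Proof.
move=> hj; have /root_Ydet_roots/rootP Ar0 : yroot j \in Ydet_roots.
  by rewrite mem_nth // size_Ydet_roots.
have /eqP : (sigma_poly * Ydet_poly).[yroot j] = 0 by rewrite hornerM Ar0 mulr0.
rewrite sigma_poly_mul_Ydet_poly !hornerE subr_eq0 eq_sym => /eqP top.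
by rewrite -[LHS]mul1r -eps_sq -mulrA top mulr1.
Qed.

Lemma zeta_neq0 j : (j < l)%N -> zeta j != 0.
Proof.
move=> hj; rewrite invr_eq0; apply: contra_eq_neq (yroot_exp hj) => ->.
by rewrite expr0n gtn_eqF // eq_sym eps_neq0.
Qed.

Lemma zeta_exp j : (j < l)%N -> zeta j ^+ n = eps.
Proof. by move=> hj; rewrite exprVn yroot_exp // /eps -exprVn invrN1. Qed.

Lemma zeta_inj i j : (i < l)%N -> (j < l)%N -> zeta i = zeta j -> i = j.
Proof.
move=> hi hj /invr_inj yij; apply/eqP.
rewrite -(nth_uniq 0 _ _ uniq_Ydet_roots) ?size_Ydet_roots //.
by rewrite -/(yroot i) -/(yroot j) yij.
Qed.

Lemma conj_zeta j : (j < l)%N -> (zeta j)^* = (zeta j)^-1.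
Proof.
move=> hj; have norm1 : `|zeta j| = 1.
  apply/eqP; rewrite -(@pexpr_eq1 _ _ n) ?normr_ge0 //.
  by rewrite -normrX zeta_exp // /eps normrX normrN1 expr1n.
by rewrite invC_norm norm1 expr1n invr1 mul1r.
Qed.

Definition Ydet_quot j := Ydet_poly %/ ('X - (yroot j)%:P).

Lemma Ydet_quotK j : (j < l)%N -> Ydet_quot j * ('X - (yroot j)%:P) = Ydet_poly.
Proof.
move=> hj; rewrite divpK // dvdp_XsubCl root_Ydet_roots //.
by rewrite mem_nth // size_Ydet_roots.
Qed.

Lemma size_Ydet_quot j : (j < l)%N -> size (Ydet_quot j) = l.
Proof.
move=> hj; have := size_Ydet_poly; rewrite -(Ydet_quotK hj) size_Mmonic ?monicXsubC //.
  by rewrite size_XsubC addn2 => -[].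
by apply: contra_neq Ydet_poly_neq0 => q0; rewrite -(Ydet_quotK hj) q0 mul0r.
Qed.

Lemma sigma_poly_mul_Ydet_quot j : (j < l)%N ->
  sigma_poly * Ydet_quot j = - (zeta j)%:P * \sum_(a < n) ((zeta j)%:P * 'X) ^+ a.
Proof.
move=> hj; apply: (@mulIf _ ('X - (yroot j)%:P)); first by rewrite polyXsubC_eq0.
rewrite -mulrA Ydet_quotK // sigma_poly_mul_Ydet_poly -mulrA mulrC -mulrA.
set y := (zeta j)%:P * 'X.
have -> : ('X - (yroot j)%:P) * - (zeta j)%:P = 1 - y.
  have y0 : yroot j != 0 by rewrite -invr_eq0 zeta_neq0.
  by rewrite mulrN mulrBl -polyCM mulfV // opprB polyC1 [in LHS]mulrC.
rewrite [RHS]mulrC -[1 - y]opprB mulNr -subrX1 opprB; congr (_ - _).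
by rewrite /y exprMn -rmorphXn zeta_exp // mul_polyC.
Qed.

Lemma coef_sigma_poly_mul_Ydet_quot j b : (j < l)%N -> (b < n)%N ->
  (sigma_poly * Ydet_quot j)`_b = - zeta j ^+ b.+1.
Proof.
move=> hj hb; rewrite sigma_poly_mul_Ydet_quot // -polyCN coefCM coef_sum.
rewrite (bigD1 (Ordinal hb)) //= big1 ?addr0 => [|a]; last first.
  by rewrite -val_eqE /= exprMn -rmorphXn coefCM coefXn eq_sym => /negbTE ->; rewrite mulr0.
by rewrite exprMn -rmorphXn coefCM coefXn eqxx mulr1 exprS mulNr.
Qed.

Definition giambelli_mx (lamf : nat -> nat) : 'M[algC]_l :=
  \matrix_(i, s) sigma v ((lamf i)%:Z + s%:Z - i%:Z).
Definition Ydet_quot_mx : 'M[algC]_l := \matrix_(s, j) (Ydet_quot j)`_(l.-1 - s).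
Definition alternant (lamf : nat -> nat) : 'M[algC]_l :=
  \matrix_(i, j) zeta j ^+ (lamf i + (l.-1 - i)).

Lemma giambelli_mulmx lamf : (forall i, (i < l)%N -> (lamf i <= k)%N) ->
  giambelli_mx lamf *m Ydet_quot_mx = alternant lamf *m diag_mx (\row_j - zeta j).
Proof.
move=> lam_le; apply/matrixP => i j; rewrite mul_mx_diag !mxE.
have hi := ltn_ord i; have hj := ltn_ord j; have := lam_le i hi.
set e := (lamf i + (l.-1 - i))%N => hlam; have he : (e < n)%N by lia.
rewrite mulrN -exprSr -coef_sigma_poly_mul_Ydet_quot // coefMr.
pose f r := sigma v (e%:Z - r%:Z) * (Ydet_quot j)`_r.
have f0_neg r : (e < r)%N -> (r < n)%N -> f r = 0.
  by move=> er _; rewrite /f sigma_lt0 ?mul0r //; lia.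
have f0_deg r : (l <= r)%N -> (r < n)%N -> f r = 0.
  by move=> lr _; rewrite /f nth_default ?mulr0 // size_Ydet_quot.
transitivity (\sum_(r < n) f r).
  rewrite -(sum_nat_widen_zero (leq_subr k n) f0_deg) (reindex_inj rev_ord_inj).
  apply: eq_bigr => r _; rewrite !mxE /f.
  have hr := ltn_ord r; congr (sigma v _ * _); first by rewrite /e /=; lia.
  by congr (nth _ _ _); rewrite /=; lia.
rewrite -(sum_nat_widen_zero he f0_neg); apply: eq_bigr => r _.
by rewrite coef_sigma_poly /f; congr (sigma v _ * _); have := ltn_ord r; lia.
Qed.

Lemma det_giambelli0 : \det (giambelli_mx (fun _ => 0%N)) = 1.
Proof.
rewrite -det_tr det_trig; last first.
  apply/forallP => i; apply/forallP => j; apply/implyP => ij.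
  by rewrite !mxE sigma_lt0 //; lia.
by rewrite big1 // => i _; rewrite !mxE /= (_ : 0%:Z + i%:Z - i%:Z = 0) //; lia.
Qed.

Lemma det_alternant0_neq0 : \det (alternant (fun _ => 0%N)) != 0.
Proof.
rewrite (@det_scale_perm _ _ _ (Vandermonde l (\row_j zeta j)) (fun _ => 1) (fun _ => 1)
  (bar_perm l 0)) => [|i j]; last first.
  rewrite !mxE mul1r mulr1; congr (_ ^+ _); rewrite bar_permE // ltn0; lia.
rewrite !big1 // !mulr1 mulf_neq0 ?signr_eq0 // det_Vandermonde.
apply/prodf_neq0 => i _; apply/prodf_neq0 => j ij; rewrite !mxE subr_eq0.
by apply: contraTneq ij => /zeta_inj <- //; rewrite ltnn.
Qed.

Lemma det_giambelli lamf : (forall i, (i < l)%N -> (lamf i <= k)%N) ->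
  \det (giambelli_mx lamf) = \det (alternant lamf) / \det (alternant (fun _ => 0%N)).
Proof.
have detGQ f : (forall i, (i < l)%N -> (f i <= k)%N) ->
    \det (giambelli_mx f) * \det Ydet_quot_mx = \det (alternant f) * \prod_(j < l) - zeta j.
  move=> f_le; rewrite -det_mulmx giambelli_mulmx // det_mulmx det_diag.
  by congr (_ * _); apply: eq_bigr => j _; rewrite mxE.
have zeta_prod_neq0 : \prod_(j < l) - zeta j != 0.
  by apply/prodf_neq0 => j _; rewrite oppr_eq0 zeta_neq0.
move=> lam_le; apply: (canRL (mulfK det_alternant0_neq0)); apply: (mulIf zeta_prod_neq0).
by rewrite -detGQ // -mulrA -detGQ // det_giambelli0 mul1r.
Qed.

Lemma prod_eps_lt d : (d <= l)%N ->
  \prod_(i < l) (if (i < d)%N then eps else 1) = eps ^+ d.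
Proof.
move=> dl; rewrite -big_mkcond /= -(big_ord_widen l (fun _ => eps) dl).
by rewrite prodr_const card_ord.
Qed.

Lemma zeta_expE j e f c : (j < l)%N -> (e + f = c)%N ->
  zeta j ^+ e = zeta j ^+ c * (zeta j)^-1 ^+ f.
Proof. by move=> hj <-; rewrite exprD -mulrA -exprMn mulfV ?zeta_neq0 // expr1n mulr1. Qed.

Lemma det_alternant_bar lamf d : (d <= l)%N ->
  (forall i, (i < l)%N -> (lamf i <= k)%N) ->
  (forall i, (d <= i)%N -> (i < l)%N -> (lamf i <= d)%N) ->
  \det (alternant (bar_fun k l lamf d)) =
  (-1) ^+ bar_perm l d * eps ^+ d * (\prod_(j < l) zeta j ^+ l.-1) *
    (\det (alternant lamf))^*.
Proof.
move=> dl lam_le_k lam_le_d; rewrite -det_map_mx (@det_scale_perm _ _ _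
  (map_mx Num.conj (alternant lamf)) (fun i => if (i < d)%N then eps else 1)
  (fun j => zeta j ^+ l.-1) (bar_perm l d)).
  by rewrite prod_eps_lt.
move=> i j; have hi := ltn_ord i; have hj := ltn_ord j.
rewrite !mxE rmorphXn /= conj_zeta // bar_permE // /bar_fun.
case: ifP => hid.
  have := lam_le_k (d - 1 - i)%N => hlam.
  rewrite [LHS](@zeta_expE _ _ (lamf (d - 1 - i) + (l.-1 - (d - 1 - i)))%N (n + l.-1)) //.
    by rewrite exprD zeta_exp // mulrAC.
  lia.
have := @lam_le_d (l - 1 - i + d)%N => hlam.
rewrite [LHS](@zeta_expE _ _ (lamf (l - 1 - i + d) + (l.-1 - (l - 1 - i + d)))%N l.-1) //.
  by rewrite mul1r mulrC.
lia.
Qed.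

Lemma det_alternant0 : \det (alternant (fun _ => 0%N)) =
  (-1) ^+ bar_perm l 0 * (\prod_(j < l) zeta j ^+ l.-1) *
    (\det (alternant (fun _ => 0%N)))^*.
Proof.
have := @det_alternant_bar (fun _ => 0%N) 0 (leq0n _) (fun _ _ => leq0n k)
  (fun _ _ _ => leq0n 0).
by rewrite expr0 mulr1.
Qed.

Lemma sign_bar_perm d : (d <= l)%N ->
  (-1) ^+ bar_perm l d * eps ^+ d = (-1) ^+ bar_perm l 0 :> algC.
Proof.
move=> dl; rewrite odd_bar_perm signr_addb mulrAC -[RHS]mul1r; congr (_ * _).
by rewrite /eps -exprM -[X in _ * X]signr_odd -signr_addb odd_rot_sign.
Qed.

Lemma det_giambelli_bar (lam : part k n) :
  \det (giambelli_mx (lam_at (bar_part lam))) = (\det (giambelli_mx (lam_at lam)))^*.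
Proof.
have le_k (mu : part k n) i : (i < l)%N -> (lam_at mu i <= k)%N.
  by move=> _; exact: lam_at_le_k.
rewrite !det_giambelli; [|exact: le_k..].
have -> : alternant (lam_at (bar_part lam)) =
           alternant (bar_fun k l (lam_at lam) (durfee lam)).
  by apply/matrixP => i j; rewrite !mxE lam_at_bar nth_bar_seq.
rewrite det_alternant_bar ?durfee_le_l //; [|exact: le_k|exact: lam_at_le_durfee].
rewrite sign_bar_perm ?durfee_le_l // [X in _ / X]det_alternant0 fmorph_div.
set c := (-1) ^+ bar_perm l 0 * _; have c_neq0 : c != 0.
  rewrite mulf_neq0 ?signr_eq0 //.
  by apply/prodf_neq0 => j _; rewrite expf_neq0 ?zeta_neq0.
by rewrite invfM mulrACA mulfV // mul1r.
Qed.

End QuantumPoint.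

Lemma schub_eval_bar k n (hk : (0 < k)%N) (hkn : (k < n)%N) (lam : part k n)
    (p : qpoint k n) :
  schub_eval (bar_part lam) p = (schub_eval lam p)^*.
Proof. by move: (det_giambelli_bar hk hkn (valP p) lam). Qed.

Lemma ev_qh_bar k n (hk : (0 < k)%N) (hkn : (k < n)%N) (D : QH k n) (p : qpoint k n) :
  ev (qh_bar D) p = (ev D p)^*.
Proof.
rewrite /ev rmorph_sum.
transitivity (\sum_lam (D lam)%:~R * schub_eval (bar_part lam) p).
  rewrite [RHS](partition_big (@bar_part k n) xpredT) //; apply: eq_bigr => mu _.
  by rewrite ffunE rmorph_sum mulr_suml; apply: eq_bigr => lam /eqP ->.
by apply: eq_bigr => lam _; rewrite rmorphM rmorph_int schub_eval_bar.
Qed.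

Lemma conjC_rect (C : numClosedFieldType) (x : C) : x^* = 'Re x - 'i * 'Im x.
Proof.
by rewrite {1}[x]Crect rmorphD rmorphM /= conjCi !conj_Creal ?Creal_Re ?Creal_Im // mulNr.
Qed.

Theorem mainTheorem8 (k n : nat) (hk : (0 < k)%N) (hkn : (k < n)%N) (D : QH k n) :
  let a := fun p : qpoint k n => 'Re (ev D p) in
  let b := fun p : qpoint k n => 'Im (ev D p) in
  (exists r : qpoint k n -> algC,
      (forall p, r p \is Num.real /\ 0 < r p) /\
      (forall p, ev (qh_bar D) p = r p * (a p - 'i * b p)))
  /\ (forall p, ev D p * ev (qh_bar D) p \is Num.real).
Proof.
move=> a b; split.
  exists (fun _ => 1); split=> p; first by rewrite real1 ltr01.
  by rewrite mul1r ev_qh_bar // conjC_rect.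
by move=> p; rewrite ev_qh_bar // ger0_real ?mul_conjC_ge0.
Qed.
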